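(* Consider the one-dimensional scalar conservation law $u_t+f(u)_x=0$ on $\Omega=[a,b]$ with periodic (or compactly supported) boundary conditions, and let $u_h(\cdot,t)\in V_h^k$ be the solution of the semi-discrete NOES-DG scheme described in the context. If for every cell $K_i$ the quantities satisfy $$\max\left\{\frac{F_i}{E_i},0\right\}<C\,\sigma_i^{jump},$$ then the scheme is entropy stable in the sense that $$\int_\Omega \partial_t u_h\, v_h\,\mathrm dx\le 0 .$$
   Context: Mesh: $a=x_{1/2}<x_{3/2}<\dots<x_{N+1/2}=b$, uniform, cells $K_i=[x_{i-1/2},x_{i+1/2}]$, $h=x_{i+1/2}-x_{i-1/2}$, midpoint $x_i$. For $k\ge 1$, $V_h^k=\{w: w|_{K_i}\in P^k(K_i)\ \forall i\}$. For $w\in V_h^k$, $w^{-}_{i+1/2}$ and $w^{+}_{i+1/2}$ denote the traces of $w$ at $x_{i+1/2}$ from $K_i$ and $K_{i+1}$, $[\![w]\!]_{i+1/2}=w^+_{i+1/2}-w^-_{i+1/2}$; with periodic boundary conditions cell indices are taken modulo $N$ (with compactly supported data the boundary flux contributions vanish). Entropy pair $(U,F)$: $U$ convex, $F'(u)=U'(u)f'(u)$; entropy variable $v(u)=U'(u)$ and $A(u)=U''(u)^{-1}\ge 0$. Numerical flux: local Lax–Friedrichs $\hat f(u^-,u^+)=\tfrac12[f(u^+)+f(u^-)]-\tfrac12\alpha(u^+-u^-)$, $\alpha=\max_{u \text{ between } u^-,u^+}|f'(u)|$, split as $\hat f=\hat f^C+\hat f^D$ with $\hat f^C=\tfrac12(f(u^+)+f(u^-))$,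 $\hat f^D=-\tfrac12\alpha(u^+-u^-)$; $\hat f_{i+1/2}=\hat f(u_h|^-_{i+1/2},u_h|^+_{i+1/2})$. Numerical entropy flux $\hat F(u^-,u^+)=\tfrac12(F(u^+)+F(u^-))$, $\hat F_{i+1/2}=\hat F(u_h|^-_{i+1/2},u_h|^+_{i+1/2})$. NOES-DG scheme: find $u_h(\cdot,t)\in V_h^k$ such that for all $w\in V_h^k$ and all $i$, $$\int_{K_i}\partial_t u_h\,w\,\mathrm dx=\int_{K_i}f(u_h)\,\partial_x w\,\mathrm dx-\hat f_{i+1/2}w^-_{i+1/2}+\hat f_{i-1/2}w^+_{i-1/2}-\sigma_i\int_{K_i}\nu_i\,\partial_x v_h\,A(u_h)\,\partial_x w\,\mathrm dx,$$ where $\nu_i(x)=1-\big(\tfrac{x-x_i}{h/2}\big)^2$, $v_h\in V_h^k$ is on each cell the degree-$k$ interpolant of $v(u_h)$ at the $k+1$ Gauss–Lobatto points of $K_i$ (so $v_h|^-_{i+1/2}=v(u_h|^-_{i+1/2})$ and $v_h|^+_{i-1/2}=v(u_h|^+_{i-1/2})$), and $\sigma_i=\max\{\sigma_i^{jump},\sigma_i^{entropy}\}$ with $\sigma_i^{jump}=c_f\big(h\|[\![u_h]\!]\|_{\partial K_i}+\sum_{l=1}^k l(l+1)h^{l+1}\|[\![\partial_x^l u_h]\!]\|_{\partial K_i}\big)$, $\|[\![\partial_x^lu_h]\!]\|_{\partial K_i}=|[\![\partial_x^lu_h]\!]_{i-1/2}|+|[\![\partial_x^lu_h]\!]_{i+1/2}|$,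 $c_f=c_0\max_{x\in K_i}|f'(u_h(x))|$ with a constant $c_0>0$; $\sigma_i^{entropy}=\min\{\max\{F_i/E_i,0\},\,C\sigma_i^{jump}\}$ with a constant $C>1$, where $E_i=\int_{K_i}\nu_i\,\partial_xv_h\,A(u_h)\,\partial_xv_h\,\mathrm dx$ and $F_i=\hat F_{i+1/2}-\hat F_{i-1/2}-\hat f^C_{i+1/2}v_h|^-_{i+1/2}+\hat f^C_{i-1/2}v_h|^+_{i-1/2}+\int_{K_i}f(u_h)\partial_xv_h\,\mathrm dx$. The integrals appearing in the scheme and those in $E_i$ and $F_i$ are evaluated in the same way (exactly, or with one and the same quadrature rule). *)

From Stdlib Require Import Reals Lra.
From Coquelicot Require Import Coquelicot.
Open Scope R_scope.

Fixpoint sumN (g : nat -> R) (n : nat) : R :=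
  match n with O => 0 | S m => sumN g m + g m end.

Definition IsPk (k : nat) (p : R -> R) : Prop :=
  exists c : nat -> R, forall x, p x = sumN (fun j => c j * x ^ j) (S k).

(* w : cell index -> function; w i is the polynomial on cell K_i, i = 0..N-1 *)
Definition InVh (N k : nat) (w : nat -> R -> R) : Prop :=
  forall i, (i < N)%nat -> IsPk k (w i).

(* uniform mesh of [a,b] with N cells; cell i (0-based) is [xL i, xR i] *)
Definition mesh_h (a b : R) (N : nat) : R := (b - a) / INR N.
Definition xL (a b : R) (N i : nat) : R := a + INR i * mesh_h a b N.
Definition xR (a b : R) (N i : nat) : R := a + INR (S i) * mesh_h a b N.
Definition xC (a b : R) (N i : nat) : R := a + (INR i + / 2) * mesh_h a b N.

Definition nxt (N i : nat) : nat := Nat.modulo (S i) N.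
Definition prv (N i : nat) : nat := Nat.modulo (i + N - 1) N.

(* traces at the interface x_{i+1/2} (right end of cell i), periodic *)
Definition trm (a b : R) (N : nat) (w : nat -> R -> R) (i : nat) : R :=
  w i (xR a b N i).
Definition trp (a b : R) (N : nat) (w : nat -> R -> R) (i : nat) : R :=
  w (nxt N i) (xL a b N (nxt N i)).
Definition jmp (a b : R) (N : nat) (w : nat -> R -> R) (l i : nat) : R :=
  Derive_n (w (nxt N i)) l (xL a b N (nxt N i)) - Derive_n (w i) l (xR a b N i).

Definition alphaLF (f : R -> R) (um up : R) : R :=
  real (Lub_Rbar (fun y => exists u, Rmin um up <= u <= Rmax um up /\ y = Rabs (Derive f u))).
Definition fhat (f : R -> R) (um up : R) : R :=
  (f up + f um) / 2 - / 2 * alphaLF f um up * (up - um).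
Definition fhatC (f : R -> R) (um up : R) : R := (f up + f um) / 2.
Definition Fhat (F : R -> R) (um up : R) : R := (F up + F um) / 2.

Definition ventr (U : R -> R) (u : R) : R := Derive U u.
Definition Aentr (U : R -> R) (u : R) : R := / Derive (Derive U) u.

(* Legendre polynomials via the three-term recurrence: leg2 m x = (P_m x, P_{m+1} x) *)
Fixpoint leg2 (n : nat) (x : R) : R * R :=
  match n with
  | O => (1, x)
  | S m => let pq := leg2 m x in
           (snd pq, ((2 * INR m + 3) * x * snd pq - (INR m + 1) * fst pq) / (INR m + 2))
  end.
Definition legendre (n : nat) (x : R) : R := fst (leg2 n x).

Definition GLnode (k : nat) (s : R) : Prop :=
  -1 <= s <= 1 /\ (1 - s ^ 2) * Derive (legendre k) s = 0.

Definition IsGLInterp (a b : R) (N k : nat) (U : R -> R) (uh vh : nat -> R -> R) : Prop :=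
  InVh N k vh /\
  forall i, (i < N)%nat -> forall s, GLnode k s ->
    vh i (xC a b N i + s * (mesh_h a b N / 2)) =
    ventr U (uh i (xC a b N i + s * (mesh_h a b N / 2))).

Definition nu (a b : R) (N i : nat) (x : R) : R :=
  1 - ((x - xC a b N i) / (mesh_h a b N / 2)) ^ 2.

Definition Ecell (a b : R) (N : nat) (U : R -> R) (uh vh : nat -> R -> R) (i : nat) : R :=
  RInt (fun x => nu a b N i x * Derive (vh i) x * Aentr U (uh i x) * Derive (vh i) x)
       (xL a b N i) (xR a b N i).

Definition Fcell (a b : R) (N : nat) (f F : R -> R) (uh vh : nat -> R -> R) (i : nat) : R :=
  Fhat F (trm a b N uh i) (trp a b N uh i)
  - Fhat F (trm a b N uh (prv N i)) (trp a b N uh (prv N i))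
  - fhatC f (trm a b N uh i) (trp a b N uh i) * vh i (xR a b N i)
  + fhatC f (trm a b N uh (prv N i)) (trp a b N uh (prv N i)) * vh i (xL a b N i)
  + RInt (fun x => f (uh i x) * Derive (vh i) x) (xL a b N i) (xR a b N i).

Definition cf (a b : R) (N : nat) (f : R -> R) (c0 : R) (uh : nat -> R -> R) (i : nat) : R :=
  c0 * real (Lub_Rbar (fun y => exists x, xL a b N i <= x <= xR a b N i /\
                                          y = Rabs (Derive f (uh i x)))).
Definition jumpnorm (a b : R) (N : nat) (uh : nat -> R -> R) (l i : nat) : R :=
  Rabs (jmp a b N uh l (prv N i)) + Rabs (jmp a b N uh l i).
Definition sig_jump (a b : R) (N k : nat) (f : R -> R) (c0 : R) (uh : nat -> R -> R) (i : nat) : R :=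
  let h := mesh_h a b N in
  cf a b N f c0 uh i *
  (h * jumpnorm a b N uh 0 i
   + sumN (fun m => INR (S m) * INR (S (S m)) * h ^ (S (S m)) * jumpnorm a b N uh (S m) i) k).

Definition sig_entropy (a b : R) (N k : nat) (f F U : R -> R) (c0 C : R)
  (uh vh : nat -> R -> R) (i : nat) : R :=
  Rmin (Rmax (Fcell a b N f F uh vh i / Ecell a b N U uh vh i) 0)
       (C * sig_jump a b N k f c0 uh i).
Definition sigma (a b : R) (N k : nat) (f F U : R -> R) (c0 C : R)
  (uh vh : nat -> R -> R) (i : nat) : R :=
  Rmax (sig_jump a b N k f c0 uh i) (sig_entropy a b N k f F U c0 C uh vh i).

(* du = d/dt uh is determined by the semi-discrete NOES-DG scheme *)
Definition NOES_DG (a b : R) (N k : nat) (f F U : R -> R) (c0 C : R)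
  (uh vh du : nat -> R -> R) : Prop :=
  forall w, InVh N k w -> forall i, (i < N)%nat ->
    RInt (fun x => du i x * w i x) (xL a b N i) (xR a b N i) =
      RInt (fun x => f (uh i x) * Derive (w i) x) (xL a b N i) (xR a b N i)
      - fhat f (trm a b N uh i) (trp a b N uh i) * w i (xR a b N i)
      + fhat f (trm a b N uh (prv N i)) (trp a b N uh (prv N i)) * w i (xL a b N i)
      - sigma a b N k f F U c0 C uh vh i *
        RInt (fun x => nu a b N i x * Derive (vh i) x * Aentr U (uh i x) * Derive (w i) x)
             (xL a b N i) (xR a b N i).

(* Test the scheme with w = v_h.  The volume term of the scheme is exactly the one in F_i,
   and the hypothesis makes sigma_i >= F_i / E_i with E_i > 0, so the viscosity term
   dominates F_i.  What is left in each cell is a difference of interface entropy fluxes;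
   the traces of v_h are v(u_h) because +-1 are Gauss-Lobatto nodes.  Summing over the
   periodic mesh, the fluxes telescope up to the dissipation
   -alpha/2 (u^+ - u^-) (v(u^+) - v(u^-)) <= 0 of the Lax-Friedrichs flux at each
   interface, which has the right sign because v = U' is increasing. *)
From Pilot Require Import Defs.
From Stdlib Require Import Reals Lra Lia.
From Coquelicot Require Import Coquelicot.
Open Scope R_scope.

Lemma sumN_le (g h : nat -> R) (n : nat) :
  (forall i, (i < n)%nat -> g i <= h i) -> sumN g n <= sumN h n.
Proof.
induction n as [|n IH]; simpl; intros Hgh; [lra|].
assert (sumN g n <= sumN h n) by (apply IH; intros; apply Hgh; lia).
specialize (Hgh n ltac:(lia)); lra.
Qed.

Lemma sumN_nonpos (g : nat -> R) (n : nat) :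
  (forall i, (i < n)%nat -> g i <= 0) -> sumN g n <= 0.
Proof.
induction n as [|n IH]; simpl; intros Hg; [lra|].
assert (sumN g n <= 0) by (apply IH; intros; apply Hg; lia).
specialize (Hg n ltac:(lia)); lra.
Qed.

Lemma sumN_ext (g h : nat -> R) (n : nat) :
  (forall i, (i < n)%nat -> g i = h i) -> sumN g n = sumN h n.
Proof.
induction n as [|n IH]; simpl; intros Hgh; [reflexivity|].
rewrite (Hgh n ltac:(lia)), IH; auto.
Qed.

Lemma sumN_minus (g h : nat -> R) (n : nat) :
  sumN (fun i => g i - h i) n = sumN g n - sumN h n.
Proof. induction n as [|n IH]; simpl; [lra|]. rewrite IH; lra. Qed.

Lemma sumN_recl (g : nat -> R) (n : nat) :
  sumN g (S n) = g 0%nat + sumN (fun i => g (S i)) n.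
Proof.
induction n as [|n IH]; [simpl; lra|].
change (sumN g (S n) + g (S n) = g 0%nat + (sumN (fun i => g (S i)) n + g (S n))).
rewrite IH; lra.
Qed.

Lemma prv_S (N i : nat) : (S i < N)%nat -> prv N (S i) = i.
Proof.
intros Hi; unfold prv.
replace (S i + N - 1)%nat with (i + 1 * N)%nat by lia.
rewrite Nat.Div0.mod_add; apply Nat.mod_small; lia.
Qed.

Lemma prv_0 (N : nat) : (1 <= N)%nat -> prv N 0 = (N - 1)%nat.
Proof. intros HN; unfold prv; apply Nat.mod_small; lia. Qed.

Lemma nxt_prv (N i : nat) : (i < N)%nat -> nxt N (prv N i) = i.
Proof.
intros Hi; unfold nxt; destruct i as [|i].
- rewrite prv_0 by lia; replace (S (N - 1)) with N by lia; apply Nat.Div0.mod_same.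
- rewrite prv_S by lia; apply Nat.mod_small; lia.
Qed.

Lemma sumN_prv (g : nat -> R) (N : nat) :
  (1 <= N)%nat -> sumN (fun i => g (prv N i)) N = sumN g N.
Proof.
intros HN; destruct N as [|M]; [lia|].
rewrite sumN_recl, prv_0 by lia; replace (S M - 1)%nat with M by lia.
rewrite (sumN_ext (fun i => g (prv (S M) (S i))) g) by (intros; rewrite prv_S by lia; auto).
simpl; lra.
Qed.

Lemma continuous_sumN (g : nat -> R -> R) (n : nat) (x : R) :
  (forall j, continuous (g j) x) -> continuous (fun y => sumN (fun j => g j y) n) x.
Proof.
intros Hg; induction n as [|n IH]; simpl.
- apply continuous_const.
- apply (continuous_plus (fun y => sumN (fun j => g j y) n) (g n)); auto.
Qed.

Lemma is_derive_sumN_monomials (c : nat -> R) (n : nat) (x : R) :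
  is_derive (fun y => sumN (fun j => c j * y ^ j) n) x
            (sumN (fun j => c j * (INR j * x ^ pred j)) n).
Proof.
induction n as [|n IH]; simpl.
- apply (is_derive_const 0).
- apply (is_derive_plus (fun y => sumN (fun j => c j * y ^ j) n) (fun y => c n * y ^ n)); auto.
  auto_derive; auto; ring.
Qed.

Lemma IsPk_continuous (k : nat) (p : R -> R) (x : R) : IsPk k p -> continuous p x.
Proof.
intros [c Hc].
apply (continuous_ext (fun y => sumN (fun j => c j * y ^ j) (S k))); [auto|].
apply continuous_sumN; intros j.
apply (ex_derive_continuous (fun y => c j * y ^ j)); auto_derive; auto.
Qed.

Lemma IsPk_Derive_continuous (k : nat) (p : R -> R) (x : R) :
  IsPk k p -> continuous (Derive p) x.
Proof.
intros [c Hc].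
apply (continuous_ext (fun y => sumN (fun j => c j * (INR j * y ^ pred j)) (S k))).
- intros y; symmetry.
  rewrite (Derive_ext _ (fun y => sumN (fun j => c j * y ^ j) (S k))) by auto.
  apply is_derive_unique, is_derive_sumN_monomials.
- apply continuous_sumN; intros j.
  apply (ex_derive_continuous (fun y => c j * (INR j * y ^ pred j))); auto_derive; auto.
Qed.

Section Mesh.

Variables (a b : R) (N : nat).
Hypotheses (Hab : a < b) (HN : (1 <= N)%nat).

Lemma mesh_h_pos : 0 < mesh_h a b N.
Proof. unfold mesh_h; apply Rdiv_lt_0_compat; [lra|]; apply lt_0_INR; lia. Qed.

Lemma xL_le_xR (i : nat) : xL a b N i <= xR a b N i.
Proof. pose proof mesh_h_pos; unfold xL, xR; rewrite S_INR; nra. Qed.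

Lemma nu_nonneg (i : nat) (x : R) :
  xL a b N i <= x <= xR a b N i -> 0 <= nu a b N i x.
Proof.
intros Hx; pose proof mesh_h_pos as Hh.
unfold xL, xR in Hx; rewrite S_INR in Hx; unfold nu, xC.
set (t := (x - (a + (INR i + / 2) * mesh_h a b N)) / (mesh_h a b N / 2)).
assert (-1 <= t <= 1).
{ unfold t; split; [apply Rle_div_r | apply Rle_div_l]; nra. }
nra.
Qed.

End Mesh.

Lemma xR_GL (a b : R) (N i : nat) :
  xR a b N i = xC a b N i + 1 * (mesh_h a b N / 2).
Proof. unfold xR, xC; rewrite S_INR; field. Qed.

Lemma xL_GL (a b : R) (N i : nat) :
  xL a b N i = xC a b N i + (-1) * (mesh_h a b N / 2).
Proof. unfold xL, xC; field. Qed.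

Lemma GLnode_1 (k : nat) : GLnode k 1.
Proof. split; [lra | ring]. Qed.

Lemma GLnode_m1 (k : nat) : GLnode k (-1).
Proof. split; [lra | ring]. Qed.

Section GLInterpolant.

Variables (a b : R) (N k : nat) (U : R -> R) (uh vh : nat -> R -> R).
Hypothesis Hvh : IsGLInterp a b N k U uh vh.

Lemma GLinterp_xR (i : nat) :
  (i < N)%nat -> vh i (xR a b N i) = ventr U (uh i (xR a b N i)).
Proof. intros Hi; rewrite xR_GL; apply (proj2 Hvh); auto using GLnode_1. Qed.

Lemma GLinterp_xL (i : nat) :
  (i < N)%nat -> vh i (xL a b N i) = ventr U (uh i (xL a b N i)).
Proof. intros Hi; rewrite xL_GL; apply (proj2 Hvh); auto using GLnode_m1. Qed.

End GLInterpolant.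

Lemma Ecell_nonneg (a b : R) (N k : nat) (U : R -> R) (uh vh : nat -> R -> R) (i : nat) :
  a < b -> (1 <= N)%nat -> (i < N)%nat ->
  (forall u, continuous (Derive (Derive U)) u) ->
  (forall u, 0 < Derive (Derive U) u) ->
  InVh N k uh -> InVh N k vh -> 0 <= Ecell a b N U uh vh i.
Proof.
intros Hab HN Hi HcU HpU Hu Hv.
assert (Hdv : forall x, continuous (Derive (vh i)) x)
  by (intros; apply (IsPk_Derive_continuous k), Hv, Hi).
assert (HA : forall x, continuous (fun y => Aentr U (uh i y)) x).
{ intros x; unfold Aentr; apply continuous_Rinv_comp; [|apply Rgt_not_eq, HpU].
  apply (continuous_comp (uh i) (Derive (Derive U))); [|apply HcU].
  apply (IsPk_continuous k), Hu, Hi. }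
assert (Hnu : forall x, continuous (nu a b N i) x)
  by (intros; apply (ex_derive_continuous (nu a b N i)); unfold nu; auto_derive;
      pose proof (mesh_h_pos a b N Hab HN); lra).
unfold Ecell; apply RInt_ge_0; [apply xL_le_xR; auto | |].
- apply (ex_RInt_continuous (V := R_CompleteNormedModule)); intros x _.
  apply (continuous_mult (fun y => nu a b N i y * Derive (vh i) y * Aentr U (uh i y)));
    [|auto].
  apply (continuous_mult (fun y => nu a b N i y * Derive (vh i) y)); [|auto].
  apply (continuous_mult (nu a b N i)); auto.
- intros x [HLx HxR].
  pose proof (nu_nonneg a b N Hab HN i x ltac:(lra)).
  assert (0 < Aentr U (uh i x)) by (apply Rinv_0_lt_compat, HpU).
  set (d := Derive (vh i) x).
  replace (nu a b N i x * d * Aentr U (uh i x) * d)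
    with (nu a b N i x * Aentr U (uh i x) * (d * d)) by ring.
  apply Rmult_le_pos; [apply Rmult_le_pos; lra | apply Rle_0_sqr].
Qed.

Lemma Fcell_le_sigma_Ecell (a b : R) (N k : nat) (f F U : R -> R) (c0 C : R)
  (uh vh : nat -> R -> R) (i : nat) :
  0 < Ecell a b N U uh vh i ->
  Rmax (Fcell a b N f F uh vh i / Ecell a b N U uh vh i) 0
    < C * sig_jump a b N k f c0 uh i ->
  Fcell a b N f F uh vh i <= Defs.sigma a b N k f F U c0 C uh vh i * Ecell a b N U uh vh i.
Proof.
intros HE Hcond.
apply (Rmult_le_reg_r (/ Ecell a b N U uh vh i)); [apply Rinv_0_lt_compat, HE|].
rewrite Rmult_assoc, Rinv_r, Rmult_1_r by lra.
unfold Defs.sigma, sig_entropy; rewrite Rmin_left by lra.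
eapply Rle_trans; [apply Rmax_l | apply Rmax_r].
Qed.

Lemma alphaLF_nonneg (f : R -> R) (um up : R) : 0 <= alphaLF f um up.
Proof.
unfold alphaLF; destruct (Lub_Rbar_correct
  (fun y => exists u, Rmin um up <= u <= Rmax um up /\ y = Rabs (Derive f u))) as [Hub _].
specialize (Hub (Rabs (Derive f um))
  (ex_intro _ um (conj (conj (Rmin_l um up) (Rmax_l um up)) eq_refl))).
pose proof (Rabs_pos (Derive f um)).
destruct Lub_Rbar; simpl in *; lra.
Qed.

Lemma increasing_diff_mul_nonneg (g dg : R -> R) :
  (forall x, is_derive g x (dg x)) -> (forall x, 0 < dg x) ->
  forall x y, 0 <= (y - x) * (g y - g x).
Proof.
intros Hd Hpos x y.
assert (Hincr : forall s t, s < t -> g s < g t)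
  by (intros s t Hst; apply (incr_function g m_infty p_infty dg); simpl; auto;
      intros; apply Rlt_gt; auto).
destruct (Rtotal_order x y) as [Hxy | [-> | Hxy]].
- specialize (Hincr x y Hxy); apply Rmult_le_pos; lra.
- lra.
- specialize (Hincr y x Hxy); nra.
Qed.

Definition fhatD (f : R -> R) (um up : R) : R := fhat f um up - fhatC f um up.

Section InterfaceFluxes.

Variables (a b : R) (N : nat) (f F U : R -> R) (uh : nat -> R -> R).

(* The numerical entropy flux through x_{j+1/2}, together with the dissipative part of the
   flux tested against v, as seen from cell j (Gminus) and from cell j+1 (Gplus). *)
Definition Gminus (j : nat) : R :=
  - Fhat F (trm a b N uh j) (trp a b N uh j)
  - fhatD f (trm a b N uh j) (trp a b N uh j) * ventr U (trm a b N uh j).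

Definition Gplus (j : nat) : R :=
  - Fhat F (trm a b N uh j) (trp a b N uh j)
  - fhatD f (trm a b N uh j) (trp a b N uh j) * ventr U (trp a b N uh j).

Lemma Gminus_le_Gplus (j : nat) :
  (forall u, ex_derive (Derive U) u) -> (forall u, 0 < Derive (Derive U) u) ->
  Gminus j <= Gplus j.
Proof.
intros HdU HpU; unfold Gminus, Gplus, fhatD, fhat, fhatC, ventr.
set (um := trm a b N uh j); set (up := trp a b N uh j).
pose proof (alphaLF_nonneg f um up).
pose proof (increasing_diff_mul_nonneg (Derive U) (Derive (Derive U))
  (fun x => Derive_correct _ _ (HdU x)) HpU um up).
nra.
Qed.

Lemma cell_entropy_estimate (k : nat) (c0 C : R) (vh du : nat -> R -> R) (i : nat) :
  (1 <= N)%nat -> (i < N)%nat ->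
  IsGLInterp a b N k U uh vh -> NOES_DG a b N k f F U c0 C uh vh du ->
  Fcell a b N f F uh vh i <= Defs.sigma a b N k f F U c0 C uh vh i * Ecell a b N U uh vh i ->
  RInt (fun x => du i x * vh i x) (xL a b N i) (xR a b N i) <= Gminus i - Gplus (prv N i).
Proof.
intros HN Hi Hvh Hs HF.
assert (Htrp : trp a b N uh (prv N i) = uh i (xL a b N i))
  by (unfold trp; rewrite nxt_prv; auto).
rewrite (Hs vh (proj1 Hvh) i Hi).
unfold Fcell, Ecell in HF; unfold Gminus, Gplus, fhatD, fhat, fhatC in *.
rewrite Htrp in *; unfold trm in *.
rewrite (GLinterp_xR a b N k U uh vh Hvh i Hi), (GLinterp_xL a b N k U uh vh Hvh i Hi) in *.
lra.
Qed.

End InterfaceFluxes.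

Theorem theorem2p2 (a b : R) (N k : nat) (f F U : R -> R) (c0 C : R)
  (uh vh du : nat -> R -> R) :
  a < b -> (1 <= N)%nat -> (1 <= k)%nat -> 0 < c0 -> 1 < C ->
  (forall u, ex_derive f u) -> (forall u, continuous (Derive f) u) ->
  (forall u, ex_derive U u) -> (forall u, ex_derive (Derive U) u) ->
  (forall u, continuous (Derive (Derive U)) u) ->
  (forall u, 0 < Derive (Derive U) u) ->
  (forall u, is_derive F u (Derive U u * Derive f u)) ->
  InVh N k uh ->
  IsGLInterp a b N k U uh vh ->
  InVh N k du ->
  NOES_DG a b N k f F U c0 C uh vh du ->
  (forall i, (i < N)%nat -> Ecell a b N U uh vh i <> 0) ->
  (forall i, (i < N)%nat ->
     Rmax (Fcell a b N f F uh vh i / Ecell a b N U uh vh i) 0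
       < C * sig_jump a b N k f c0 uh i) ->
  sumN (fun i => RInt (fun x => du i x * vh i x) (xL a b N i) (xR a b N i)) N <= 0.
Proof.
intros Hab HN _ _ _ _ _ _ HdU HcU HpU _ Hu Hvh _ Hs HE Hcond.
set (Gm := Gminus a b N f F U uh); set (Gp := Gplus a b N f F U uh).
assert (Hcell : forall i, (i < N)%nat ->
  RInt (fun x => du i x * vh i x) (xL a b N i) (xR a b N i) <= Gm i - Gp (prv N i)).
{ intros i Hi.
  assert (HEpos : 0 < Ecell a b N U uh vh i).
  { destruct (Ecell_nonneg a b N k U uh vh i Hab HN Hi HcU HpU Hu (proj1 Hvh)); auto.
    exfalso; apply (HE i Hi); auto. }
  apply (cell_entropy_estimate a b N f F U uh k c0 C vh du i HN Hi Hvh Hs).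
  apply Fcell_le_sigma_Ecell; auto. }
eapply Rle_trans; [apply sumN_le, Hcell|].
rewrite sumN_minus, (sumN_prv Gp N HN), <- sumN_minus.
apply sumN_nonpos; intros j _.
pose proof (Gminus_le_Gplus a b N f F U uh j HdU HpU); unfold Gm, Gp; lra.
Qed.
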